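(* Let $k\ge 1$ and let $L=(l_1,\ldots,l_k)$ be a sequence of positive integers, and let $S=S(L)$ be the spider defined by $L$. Let $t$ be an integer with $1\le t\le \alpha(S)$. Then for each $1\le i\le k$ and each $1\le j<l_i$ we have $$|\mathcal{I}^t_{v_{i,j}}(S)|\le |\mathcal{I}^t_{v_{i,l_i}}(S)|.$$
   Context: For a graph $G$, $\alpha(G)$ is the maximum size of an independent set in $G$, and for an integer $t\le\alpha(G)$, $\mathcal{I}^t(G)$ denotes the family of all independent sets of $G$ of size $t$. For a vertex $x$, $\mathcal{I}^t_x(G)$ denotes the subfamily of sets in $\mathcal{I}^t(G)$ containing $x$ (the star centered at $x$). Given a sequence of positive integers $L=(l_1,\ldots,l_k)$, the spider $S(L)$ is the tree consisting of a head vertex $v_0$ and, for each $1\le i\le k$, a leg which is the path $v_0,v_{i,1},v_{i,2},\ldots,v_{i,l_i}$; distinct legs share only $v_0$. *)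

From mathcomp Require Import all_boot.
Set Implicit Arguments. Unset Strict Implicit. Unset Printing Implicit Defensive.

Definition independent (T : finType) (e : rel T) (A : {set T}) : bool :=
  [forall x in A, forall y in A, ~~ e x y].

Definition alpha (T : finType) (e : rel T) : nat :=
  \max_(A : {set T} | independent e A) #|A|.

Definition Ind (T : finType) (e : rel T) (t : nat) : {set {set T}} :=
  [set A : {set T} | independent e A & #|A| == t].

Definition IndStar (T : finType) (e : rel T) (t : nat) (x : T) : {set {set T}} :=
  [set A in Ind e t | x \in A].

(* The spider S(L), L = (l_0,...,l_{k-1}) given as l : 'I_k -> nat.
   Vertices: None = head v_0; Some (Tagged i j) = v_{i, j+1} (j : 'I_(l i)). *)
Definition spider_vert (k : nat) (l : 'I_k -> nat) : finType :=
  option {i : 'I_k & 'I_(l i)}.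

Definition spider_adj (k : nat) (l : 'I_k -> nat) : rel (spider_vert l) :=
  fun x y =>
    match x, y with
    | None, Some u => val (tagged u) == 0
    | Some u, None => val (tagged u) == 0
    | Some u, Some w =>
        (tag u == tag w) &&
        (((val (tagged u)).+1 == val (tagged w)) ||
         ((val (tagged w)).+1 == val (tagged u)))
    | None, None => false
    end.

(* v_{i,j} for 1 <= j <= l_i (and the head v_0 when j = 0 or j out of range). *)
Definition spider_v (k : nat) (l : 'I_k -> nat) (i : 'I_k) (j : nat)
  : spider_vert l :=
  match (insub j.-1 : option 'I_(l i)) with
  | Some o => Some (Tagged (fun i => 'I_(l i)) o)
  | None => None
  end.

Arguments spider_vert {k} l.
Arguments spider_adj {k} l.
Arguments spider_v {k} l i j.

(** Reflecting the end segment v_{i,j}, ..., v_{i,l_i} of the i-th leg is an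
    involution of S exchanging v_{i,j} and v_{i,l_i}, and every edge between
    two image vertices comes from an edge or from a pair containing v_{i,l_i}
    (v_{i,l_i} lands next to v_{i,j-1}).  So it maps the independent t-sets
    containing v_{i,j} but not v_{i,l_i} injectively to those containing
    v_{i,l_i} but not v_{i,j}; the sets containing both are common to both
    stars. *)

From mathcomp Require Import all_boot.
From mathcomp Require Import zify.
Set Implicit Arguments. Unset Strict Implicit. Unset Printing Implicit Defensive.

Section Switching.

Variables (T : finType) (e : rel T) (f : T -> T) (a b : T).
Hypotheses (fK : involutive f) (f_ab : f a = b)
  (f_adj : forall x y, e (f x) (f y) -> [|| e x y, x == b | y == b]).

Lemma independent_imset (A : {set T}) :
  independent e A -> b \notin A -> independent e (f @: A).
Proof.
move=> /forallP indA bA; apply/forallP => x'; apply/implyP => /imsetP[x xA ->].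
apply/forallP => y'; apply/implyP => /imsetP[y yA ->].
apply/negP => /f_adj /or3P[exy | /eqP xb | /eqP yb].
- by move: (indA x) => /implyP/(_ xA)/forallP/(_ y)/implyP/(_ yA)/negP.
- by move: bA; rewrite -xb xA.
- by move: bA; rewrite -yb yA.
Qed.

Lemma card_IndStar_le (t : nat) : #|IndStar e t a| <= #|IndStar e t b|.
Proof.
set I := IndStar e t.
rewrite -(cardsID (I b) (I a)) -(cardsID (I a) (I b)) setIC leq_add2l.
rewrite -(card_imset _ (imset_inj (inv_inj fK))).
apply: subset_leq_card; apply/subsetP => _ /imsetP[A + ->].
rewrite /I /IndStar /Ind !inE => /andP[bA' /andP[/andP[indA /eqP cardA] aA]].
have bA : b \notin A by apply: contra bA' => bA; rewrite indA cardA eqxx.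
have b_fA : b \in f @: A by rewrite -f_ab imset_f.
have a_fA : a \notin f @: A.
  by apply/imsetP => -[x xA ax]; move: bA; rewrite -f_ab ax fK xA.
rewrite independent_imset // card_imset; last exact: inv_inj fK.
by rewrite cardA eqxx b_fA (negbTE a_fA).
Qed.

End Switching.

Definition flip_from (a m n : nat) : nat := if a <= n then a + m - n else n.

Lemma flip_from_le a m n : n <= m -> flip_from a m n <= m.
Proof. by rewrite /flip_from; case: ifP; lia. Qed.

Lemma flip_fromK a m n : n <= m -> flip_from a m (flip_from a m n) = n.
Proof.
rewrite /flip_from => le_nm; case: (leqP a n) => [le_an | lt_na]; last by rewrite leqNgt lt_na.
by rewrite ifT; lia.
Qed.

Lemma flip_from_start a m : a <= m -> flip_from a m a = m.
Proof. by rewrite /flip_from leqnn; lia. Qed.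

Lemma flip_from_eq0 a m n : n <= m -> flip_from a m n = 0 -> (n == 0) || (n == m).
Proof. by rewrite /flip_from; case: ifP; lia. Qed.

Lemma flip_from_adj a m n1 n2 : n1 <= m -> n2 <= m ->
    ((flip_from a m n1).+1 == flip_from a m n2)
    || ((flip_from a m n2).+1 == flip_from a m n1) ->
  [|| (n1.+1 == n2) || (n2.+1 == n1), n1 == m | n2 == m].
Proof. by rewrite /flip_from; case: ifP; case: ifP; lia. Qed.

Definition ord_flip n (a : nat) (o : 'I_n) : 'I_n := insubd o (flip_from a n.-1 o).

Lemma val_ord_flip n a (o : 'I_n) : val (ord_flip a o) = flip_from a n.-1 o.
Proof.
have o_le : o <= n.-1 by have := ltn_ord o; lia.
have flip_lt : flip_from a n.-1 o < n by have := flip_from_le a o_le; have := ltn_ord o; lia.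
by rewrite val_insubd flip_lt.
Qed.

Lemma ord_flipK n a : involutive (@ord_flip n a).
Proof.
move=> o; apply: val_inj; rewrite !val_ord_flip flip_fromK //.
by have := ltn_ord o; lia.
Qed.

Lemma spider_adjC k (l : 'I_k -> nat) (x y : spider_vert l) :
  spider_adj l x y = spider_adj l y x.
Proof. by case: x y => [[? ?]|] [[? ?]|] //=; rewrite eq_sym orbC. Qed.

Section SpiderLeg.

Variables (k : nat) (l : 'I_k -> nat) (i : 'I_k).

Definition leg_vertex (o : 'I_(l i)) : spider_vert l :=
  Some (Tagged (fun j => 'I_(l j)) o).

Lemma leg_vertex_inj : injective leg_vertex.
Proof.
move=> o1 o2 [] e12.
by have := congr1 (tagged_as (Tagged (fun j => 'I_(l j)) o1)) e12; rewrite !tagged_asE.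
Qed.

Lemma spider_v_leg n (n_lt : n < l i) : spider_v l i n.+1 = leg_vertex (Ordinal n_lt).
Proof. by rewrite /spider_v /= insubT. Qed.

Definition leg_flip (a : nat) (x : spider_vert l) : spider_vert l :=
  if x is Some (existT j o) then
    (if j == i then Some (Tagged (fun j => 'I_(l j)) (ord_flip a o)) else x)
  else x.

Lemma leg_flipK a : involutive (leg_flip a).
Proof.
case=> [[j o]|] //=; case: eqP => [ji | /eqP nji] /=; last by rewrite (negbTE nji).
by subst j; rewrite eqxx ord_flipK.
Qed.

Lemma leg_flip_vertex a o : leg_flip a (leg_vertex o) = leg_vertex (ord_flip a o).
Proof. by rewrite /= eqxx. Qed.

Variant on_leg_spec (x : spider_vert l) : Type :=
  | OnLeg (o : 'I_(l i)) of x = leg_vertex o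
  | OffLeg of (forall a, leg_flip a x = x)
      & (forall o, spider_adj l x (leg_vertex o) = (x == None) && (val o == 0)).

Lemma on_legP x : on_leg_spec x.
Proof.
case: x => [[j o]|]; last by apply: OffLeg.
case: (eqVneq j i) => [ji | nji]; first by subst j; exact: OnLeg.
by apply: OffLeg => [a | o'] /=; rewrite (negbTE nji).
Qed.

Lemma leg_flip_adj a (ob : 'I_(l i)) : val ob = (l i).-1 ->
  forall x y, spider_adj l (leg_flip a x) (leg_flip a y) ->
    [|| spider_adj l x y, x == leg_vertex ob | y == leg_vertex ob].
Proof.
move=> ob_last.
have o_le (o : 'I_(l i)) : o <= (l i).-1 by have := ltn_ord o; lia.
have o_last (o : 'I_(l i)) : (leg_vertex o == leg_vertex ob) = (val o == (l i).-1).
  by rewrite (inj_eq leg_vertex_inj) -val_eqE ob_last.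
have flip_eq0 (o : 'I_(l i)) :
    val (ord_flip a o) == 0 -> (val o == 0) || (leg_vertex o == leg_vertex ob).
  by rewrite o_last val_ord_flip => /eqP/flip_from_eq0; apply.
move=> x y; case: (on_legP x) => [o1 -> | fx adjx]; case: (on_legP y) => [o2 -> | fy adjy].
- rewrite !leg_flip_vertex /= eqxx /= !val_ord_flip -!/(leg_vertex _) !o_last.
  exact: flip_from_adj (o_le o1) (o_le o2).
- rewrite leg_flip_vertex fy spider_adjC adjy spider_adjC adjy.
  by case/andP=> -> /flip_eq0 /orP[-> | ->]; rewrite ?orbT.
- rewrite leg_flip_vertex fx adjx adjx.
  by case/andP=> -> /flip_eq0 /orP[-> | ->]; rewrite ?orbT.
- by rewrite fx fy => ->.
Qed.

End SpiderLeg.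

Theorem theorem2p1 (k : nat) (l : 'I_k -> nat) (t : nat) :
  0 < k ->
  (forall i, 0 < l i) ->
  1 <= t <= alpha (spider_adj l) ->
  forall (i : 'I_k) (j : nat), 1 <= j < l i ->
    #|IndStar (spider_adj l) t (spider_v l i j)|
      <= #|IndStar (spider_adj l) t (spider_v l i (l i))|.
Proof.
move=> _ _ _ i j /andP[j_gt0 j_lt].
have j_ord : j.-1 < l i by lia.
have last_ord : (l i).-1 < l i by lia.
rewrite -(prednK j_gt0) -(ltn_predK j_lt) (spider_v_leg j_ord) (spider_v_leg last_ord).
apply: (card_IndStar_le (f := leg_flip i j.-1)).
- exact: leg_flipK.
- rewrite leg_flip_vertex; congr leg_vertex; apply: val_inj.
  by rewrite val_ord_flip flip_from_start //=; lia.
- exact: leg_flip_adj.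
Qed.
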